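(* Let $N=\{1,\dots,n\}$, $n\ge 2$, be a parallel-link network with one unit of demand and affine latencies $\ell_i(x_i)=a_ix_i+b_i$ with $a_i>0$, $b_i\ge 0$ for all $i\in N$. Then for every price cap $c\in\mathbb{R}_+$ there exists a $c$-capped subgame perfect Nash equilibrium, i.e. $\mathcal{T}(c)\neq\emptyset$.
   Context: Model: a finite set $N=\{1,\dots,n\}$, $n\ge 2$, of parallel links connecting a common source to a common destination; one unit of flow must be sent. A flow is a vector $x\in\mathbb{R}^N_+$ with $\sum_{i\in N}x_i=1$. Each link $i$ has a latency function $\ell_i$. A toll vector is $t\in\mathbb{R}^N_+$; the effective cost of link $i$ is $\ell_i(x_i)+t_i$. A flow $x$ is a Wardrop equilibrium for $t$ if for all $i,j\in N$ with $x_i>0$, $\ell_i(x_i)+t_i\le \ell_j(x_j)+t_j$; under the assumptions used it exists and is unique, and is denoted $x(t)$. Firm $i$ owns link $i$ and has profit $\Pi_i(t_i,t_{-i})=t_i\cdot x_i(t)$. For $c\in\mathbb{R}_+$, a toll vector $t$ is a $c$-capped subgame perfect Nash equilibrium if $0\le t_i\le c$ for all $i$ and, for every $i\in N$ and every $t_i'\in[0,c]$, $\Pi_i(t_i,t_{-i})\ge \Pi_i(t_i',t_{-i})$ (where the flow is recomputed as the Wardrop equilibrium for $(t'_i,t_{-i})$). $\mathcal{T}(c)$ denotes the set of such equilibria. *)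

(* classical real numbers. Links are indexed by 0..n-1. *)
From Stdlib Require Import Reals Lra Lia.
Open Scope R_scope.

Fixpoint rsum (n : nat) (f : nat -> R) : R :=
  match n with
  | O => 0
  | S m => rsum m f + f m
  end.

Definition is_flow (n : nat) (x : nat -> R) : Prop :=
  (forall i, (i < n)%nat -> 0 <= x i) /\ rsum n x = 1.

Definition wardrop (n : nat) (l : nat -> R -> R) (t x : nat -> R) : Prop :=
  is_flow n x /\
  forall i j, (i < n)%nat -> (j < n)%nat -> 0 < x i ->
    l i (x i) + t i <= l j (x j) + t j.

Definition update (t : nat -> R) (i : nat) (v : R) : nat -> R :=
  fun j => if Nat.eqb j i then v else t j.

(* c-capped subgame perfect Nash equilibrium. Profits are evaluated at the
   (unique) Wardrop equilibrium, expressed by quantifying over all Wardrop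
   equilibria of the respective toll vectors. *)
Definition capped_SPNE (n : nat) (l : nat -> R -> R) (c : R) (t : nat -> R) : Prop :=
  (forall i, (i < n)%nat -> 0 <= t i <= c) /\
  forall i, (i < n)%nat -> forall v, 0 <= v <= c ->
    forall x x', wardrop n l t x -> wardrop n l (update t i v) x' ->
      t i * x i >= v * x' i.

From Stdlib Require Import Reals Lra Lia Classical.
Open Scope R_scope.

(* Fix a level L for the common cost and weights w with w_j = 1 for links with
   b_j < L, w_j = 0 for b_j > L and w_j in [0, 1] for b_j = L.  If firm i
   changes its toll, the used links j <> i absorb the resulting change of the
   common cost at rate K_i = sum_{j <> i} w_j / a_j, so firm i faces a linear
   residual demand whose revenue is maximised by the toll
   (L - b_i) (1 + a_i K_i) / (1 + 2 a_i K_i); we charge this toll capped at c.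
   A true deviation loses flow at least as fast as this linear model predicts,
   hence never pays.  The induced flows depend continuously on L and w, and
   along the staircase of admissible pairs (L, w) the intermediate value
   theorem yields a pair whose flows sum to one. *)

Lemma rsum_ext n f g : (forall i, (i < n)%nat -> f i = g i) -> rsum n f = rsum n g.
Proof.
  induction n as [|n IH]; intros E; simpl; auto.
  rewrite IH, E; [reflexivity | lia | intros; apply E; lia].
Qed.

Lemma rsum_le n f g : (forall i, (i < n)%nat -> f i <= g i) -> rsum n f <= rsum n g.
Proof.
  induction n as [|n IH]; intros H; simpl; [lra|].
  assert (rsum n f <= rsum n g) by (apply IH; intros; apply H; lia).
  assert (f n <= g n) by (apply H; lia).
  lra.
Qed.

Lemma rsum_zero n : rsum n (fun _ => 0) = 0.
Proof. induction n as [|n IH]; simpl; [|rewrite IH]; ring. Qed.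

Lemma rsum_nonneg n f : (forall i, (i < n)%nat -> 0 <= f i) -> 0 <= rsum n f.
Proof. intros H. rewrite <- (rsum_zero n). apply rsum_le, H. Qed.

Lemma rsum_le_eq n f g : (forall i, (i < n)%nat -> f i <= g i) ->
  rsum n f = rsum n g -> forall i, (i < n)%nat -> f i = g i.
Proof.
  induction n as [|n IH]; intros H E i Hi; simpl in E; [lia|].
  assert (rsum n f <= rsum n g) by (apply rsum_le; intros; apply H; lia).
  assert (f n <= g n) by (apply H; lia).
  destruct (Nat.eq_dec i n) as [->|Hin]; [lra|].
  apply IH; [intros; apply H; lia | lra | lia].
Qed.

Lemma rsum_pos_exists n f : (forall i, (i < n)%nat -> 0 <= f i) ->
  0 < rsum n f -> exists i, (i < n)%nat /\ 0 < f i.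
Proof.
  intros H Hpos. apply NNPP. intros Hno.
  assert (rsum n f <= rsum n (fun _ => 0)).
  { apply rsum_le. intros i Hi.
    destruct (Rlt_le_dec 0 (f i)); [exfalso; eauto | lra]. }
  rewrite rsum_zero in *. lra.
Qed.

Definition rsum_except (n i : nat) (f : nat -> R) : R :=
  rsum n (fun j => if Nat.eqb j i then 0 else f j).

Lemma rsum_split n f i : (i < n)%nat -> rsum n f = f i + rsum_except n i f.
Proof.
  unfold rsum_except. induction n as [|n IH]; intros Hi; simpl; [lia|].
  destruct (Nat.eq_dec i n) as [->|Hin].
  - rewrite Nat.eqb_refl.
    rewrite (rsum_ext n (fun j => if Nat.eqb j n then 0 else f j) f); [ring|].
    intros j Hj. destruct (Nat.eqb_spec j n); [lia | reflexivity].
  - rewrite IH by lia. destruct (Nat.eqb_spec n i); [lia | ring].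
Qed.

Lemma rsum_except_le n i f g : (forall j, (j < n)%nat -> j <> i -> f j <= g j) ->
  rsum_except n i f <= rsum_except n i g.
Proof.
  intros H. apply rsum_le. intros j Hj.
  destruct (Nat.eqb_spec j i); [lra | auto].
Qed.

Lemma rsum_except_affine n i f g d :
  rsum_except n i (fun j => f j + g j * d) = rsum_except n i f + rsum_except n i g * d.
Proof.
  unfold rsum_except. induction n as [|n IH]; simpl; [ring|].
  rewrite IH. destruct (Nat.eqb n i); ring.
Qed.

Lemma exists_argmin n (P : nat -> Prop) (f : nat -> R) :
  (exists i, (i < n)%nat /\ P i) ->
  exists k, (k < n)%nat /\ P k /\ forall j, (j < n)%nat -> P j -> f k <= f j.
Proof.
  induction n as [|n IH]; intros [i [Hi Pi]]; [lia|].
  destruct (classic (exists i, (i < n)%nat /\ P i)) as [Hex|Hno].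
  - destruct (IH Hex) as [k [Hk [Pk Mk]]].
    assert (Hle : forall j, (j < S n)%nat -> j <> n -> P j -> f k <= f j)
      by (intros; apply Mk; auto; lia).
    destruct (classic (P n /\ f n < f k)) as [[Pn Hlt]|Hnot].
    + exists n. repeat split; auto. intros j Hj Pj.
      destruct (Nat.eq_dec j n) as [->|]; [lra|]. specialize (Hle j Hj n0 Pj). lra.
    + exists k. repeat split; auto. intros j Hj Pj.
      destruct (Nat.eq_dec j n) as [->|]; [|auto].
      destruct (Rlt_le_dec (f n) (f k)); [tauto | lra].
  - assert (i = n) as ->.
    { destruct (Nat.eq_dec i n); [auto | exfalso; apply Hno; exists i; split; auto; lia]. }
    exists n. repeat split; auto. intros j Hj Pj.
    destruct (Nat.eq_dec j n) as [->|]; [lra|].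
    exfalso. apply Hno. exists j. split; auto. lia.
Qed.

Lemma exists_argmax n (P : nat -> Prop) (f : nat -> R) :
  (exists i, (i < n)%nat /\ P i) ->
  exists k, (k < n)%nat /\ P k /\ forall j, (j < n)%nat -> P j -> f j <= f k.
Proof.
  intros H. destruct (exists_argmin n P (fun i => - f i) H) as [k [Hk [Pk Mk]]].
  exists k. repeat split; auto. intros j Hj Pj. specialize (Mk j Hj Pj). lra.
Qed.

Lemma continuity_const_fun k : continuity (fun _ => k).
Proof. apply continuity_const. intros x y. reflexivity. Qed.

Lemma continuity_id_fun : continuity (fun p => p).
Proof. exact (derivable_continuous id derivable_id). Qed.

Lemma continuity_ext f g : (forall p, f p = g p) -> continuity f -> continuity g.
Proof. intros E Hf p. apply (continuity_pt_locally_ext f g 1 p); auto; lra. Qed.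

Lemma continuity_Rmax f g : continuity f -> continuity g ->
  continuity (fun p => Rmax (f p) (g p)).
Proof.
  intros Hf Hg. apply (continuity_ext (fun p => (f p + g p + Rabs (f p - g p)) / 2)).
  - intros p. unfold Rmax. destruct (Rle_dec (f p) (g p)).
    + rewrite Rabs_left1; lra.
    + rewrite Rabs_right; lra.
  - apply (continuity_div (fun p => f p + g p + Rabs (f p - g p)) (fun _ => 2));
      [| apply continuity_const_fun | intros; lra].
    apply (continuity_plus (fun p => f p + g p) (fun p => Rabs (f p - g p)));
      [apply continuity_plus; assumption|].
    apply (continuity_comp (fun p => f p - g p) Rabs);
      [apply continuity_minus; assumption | exact Rcontinuity_abs].
Qed.

Lemma continuity_Rmin f g : continuity f -> continuity g ->
  continuity (fun p => Rmin (f p) (g p)).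
Proof.
  intros Hf Hg. apply (continuity_ext (fun p => f p + g p - Rmax (f p) (g p))).
  - intros p. unfold Rmin, Rmax. destruct (Rle_dec (f p) (g p)); lra.
  - apply (continuity_minus (fun p => f p + g p) (fun p => Rmax (f p) (g p)));
      [apply continuity_plus | apply continuity_Rmax]; assumption.
Qed.

Ltac continuity_auto :=
  repeat match goal with
  | |- continuity (fun _ => ?k) => apply continuity_const_fun
  | |- continuity (fun p => p) => apply continuity_id_fun
  | |- continuity (fun p => Rmin (@?f p) (@?g p)) => apply (continuity_Rmin f g)
  | |- continuity (fun p => Rmax (@?f p) (@?g p)) => apply (continuity_Rmax f g)
  | |- continuity (fun p => @?f p + @?g p) => apply (continuity_plus f g)
  | |- continuity (fun p => @?f p - @?g p) => apply (continuity_minus f g)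
  | |- continuity (fun p => @?f p * @?g p) => apply (continuity_mult f g)
  | |- continuity (fun p => @?f p / @?g p) => apply (continuity_div f g)
  | |- continuity _ => assumption
  end.

Lemma continuity_rsum n (F : R -> nat -> R) :
  (forall i, (i < n)%nat -> continuity (fun p => F p i)) -> continuity (fun p => rsum n (F p)).
Proof.
  induction n as [|n IH]; intros H; simpl.
  - apply continuity_const_fun.
  - apply (continuity_plus (fun p => rsum n (F p)) (fun p => F p n)).
    + apply IH. intros; apply H; lia.
    + apply H; lia.
Qed.

Definition on_level n (l : nat -> R -> R) (t x : nat -> R) (M : R) : Prop :=
  forall j, (j < n)%nat -> M <= l j (x j) + t j /\ (0 < x j -> l j (x j) + t j = M).

Lemma wardrop_on_level n l t x : wardrop n l t x -> exists M, on_level n l t x M.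
Proof.
  intros [[Hx Hsum] W].
  destruct (rsum_pos_exists n x Hx ltac:(lra)) as [k [Hk Hxk]].
  exists (l k (x k) + t k). intros j Hj. split.
  - exact (W k j Hk Hj Hxk).
  - intros Hxj. pose proof (W k j Hk Hj Hxk). pose proof (W j k Hj Hk Hxj). lra.
Qed.

Section Uniqueness.

Variables (n : nat) (l : nat -> R -> R).
Hypothesis Hl : forall j, (j < n)%nat -> forall p q, p < q -> l j p < l j q.

Lemma on_level_flow_le t x y M L : (forall j, (j < n)%nat -> 0 <= x j) ->
  on_level n l t x M -> on_level n l t y L -> L <= M -> forall j, (j < n)%nat -> y j <= x j.
Proof.
  intros Hx HM HL HLM j Hj.
  destruct (Rlt_le_dec 0 (y j)) as [Hy|Hy]; [|pose proof (Hx j Hj); lra].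
  destruct (Rle_lt_dec (y j) (x j)) as [|Hlt]; [assumption|].
  pose proof (Hl j Hj _ _ Hlt). pose proof (proj1 (HM j Hj)). pose proof (proj2 (HL j Hj) Hy).
  lra.
Qed.

Lemma on_level_flow_unique t x y M L : is_flow n x -> is_flow n y ->
  on_level n l t x M -> on_level n l t y L -> forall j, (j < n)%nat -> x j = y j.
Proof.
  intros [Hx Sx] [Hy Sy] HM HL j Hj.
  destruct (Rle_lt_dec L M).
  - symmetry. apply (rsum_le_eq n y x); try congruence; auto.
    exact (on_level_flow_le t x y M L Hx HM HL ltac:(lra)).
  - apply (rsum_le_eq n x y); try congruence; auto.
    exact (on_level_flow_le t y x L M Hy HL HM ltac:(lra)).
Qed.

End Uniqueness.

Definition weight_sum (n : nat) (a w : nat -> R) (i : nat) : R :=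
  rsum_except n i (fun j => w j / a j).

(* Taking the positive part makes links with b_i >= L carry neither flow nor
   toll without a case split, and keeps everything continuous in L. *)
Definition headroom (L bi : R) : R := Rmax 0 (L - bi).

Definition best_toll (a K u : R) : R := u * (1 + a * K) / (1 + 2 * a * K).

Section Link.

Variables a K u c : R.
Hypotheses (Ha : 0 < a) (HK : 0 <= K) (Hu : 0 <= u) (Hc : 0 <= c).

Lemma best_toll_spec : best_toll a K u * (1 + 2 * a * K) = u * (1 + a * K).
Proof. unfold best_toll. field. nra. Qed.

Lemma best_toll_bounds : 0 <= best_toll a K u <= u.
Proof. pose proof best_toll_spec. assert (0 <= a * K) by nra. split; nra. Qed.

Lemma capped_toll_bounds :
  0 <= Rmin c (best_toll a K u) <= c /\ Rmin c (best_toll a K u) <= u.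
Proof.
  pose proof best_toll_bounds.
  unfold Rmin. destruct (Rle_dec c (best_toll a K u)); lra.
Qed.

(* With y = (u - T) / a, the first alternative y (1 + a K) = K T is the
   first-order condition of revenue maximisation against the linear residual
   demand; otherwise the cap binds. *)
Lemma capped_toll_shape :
  let T := Rmin c (best_toll a K u) in
  (u - T) / a * (1 + a * K) = K * T \/ (T = c /\ K * c <= (u - T) / a * (1 + a * K)).
Proof.
  intros T. pose proof best_toll_spec as HX.
  assert (HaK : 0 <= a * K) by nra.
  assert (Hya : (u - T) / a * a = u - T) by (field; lra).
  set (y := (u - T) / a) in *.
  unfold T, Rmin in *. destruct (Rle_dec c (best_toll a K u)) as [Hcap|Hfree].
  - right. split; [reflexivity|].
    apply (Rmult_le_reg_r a); [lra|].
    assert (c * (1 + 2 * a * K) <= best_toll a K u * (1 + 2 * a * K))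
      by (apply Rmult_le_compat_r; lra).
    replace (y * (1 + a * K) * a) with (y * a * (1 + a * K)) by ring.
    rewrite Hya. nra.
  - left. apply (Rmult_eq_reg_r a); [|lra].
    replace (y * (1 + a * K) * a) with (y * a * (1 + a * K)) by ring.
    rewrite Hya. nra.
Qed.

End Link.

(* With D = 1 + a K, a deviation to v loses flow at least at rate K / D, and
   the shape of the capped toll t makes v |-> v (y - K (v - t) / D) maximal at
   v = t on [0, c]. *)
Lemma deviation_profit_le K D y x t v c :
  0 <= K -> 0 < D -> 0 <= v <= c ->
  K * (v - t) <= (y - x) * D ->
  y * D = K * t \/ (t = c /\ K * c <= y * D) ->
  v * x <= t * y.
Proof.
  intros HK HD Hv Hdev Hshape.
  apply (Rmult_le_reg_r D); [exact HD|].
  assert (v * x * D <= v * (y * D - K * (v - t))) by nra.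
  destruct Hshape as [Hfree | [-> Hcap]].
  - assert (0 <= K * ((t - v) * (t - v))) by (apply Rmult_le_pos; [lra | apply Rle_0_sqr]).
    replace (t * y * D) with (t * (y * D)) by ring. rewrite Hfree in *. nra.
  - assert (0 <= (c - v) * (y * D - K * v)) by (apply Rmult_le_pos; nra).
    nra.
Qed.

Definition capped_toll n (a b : nat -> R) c (w : nat -> R) L i : R :=
  Rmin c (best_toll (a i) (weight_sum n a w i) (headroom L (b i))).

Definition induced_flow n (a b : nat -> R) c (w : nat -> R) L i : R :=
  (headroom L (b i) - capped_toll n a b c w L i) / a i.

Definition total_flow n a b c w L : R := rsum n (induced_flow n a b c w L).

Definition admissible_weights n (b : nat -> R) L (w : nat -> R) : Prop :=
  forall j, (j < n)%nat -> 0 <= w j <= 1 /\ (b j < L -> w j = 1) /\ (L < b j -> w j = 0).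

Definition balanced n a b c L w : Prop :=
  admissible_weights n b L w /\ total_flow n a b c w L = 1.

Lemma headroom_nonneg L bi : 0 <= headroom L bi.
Proof. apply Rmax_l. Qed.

Lemma weight_sum_nonneg n a w i : (forall j, (j < n)%nat -> 0 < a j) ->
  (forall j, (j < n)%nat -> 0 <= w j) -> 0 <= weight_sum n a w i.
Proof.
  intros Ha Hw. apply rsum_nonneg. intros j Hj.
  destruct (Nat.eqb j i); [lra|]. pose proof (Ha j Hj). pose proof (Hw j Hj).
  unfold Rdiv. apply Rmult_le_pos; [lra | left; apply Rinv_0_lt_compat; lra].
Qed.

Section Equilibrium.

Variables (n : nat) (a b : nat -> R) (c L : R) (w : nat -> R).
Hypotheses (Ha : forall i, (i < n)%nat -> 0 < a i) (Hc : 0 <= c).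
Hypothesis Hbal : balanced n a b c L w.

Local Notation K := (weight_sum n a w).
Local Notation t := (capped_toll n a b c w L).
Local Notation y := (induced_flow n a b c w L).
Local Notation lat := (fun i z => a i * z + b i).

Lemma balanced_weight_sum_nonneg i : 0 <= K i.
Proof. apply weight_sum_nonneg; [exact Ha|]. intros j Hj. apply (proj1 Hbal j Hj). Qed.

Lemma induced_toll_bounds i : (i < n)%nat -> 0 <= t i <= c.
Proof.
  intros Hi. apply capped_toll_bounds; auto using balanced_weight_sum_nonneg, headroom_nonneg.
Qed.

Lemma induced_flow_cost i : (i < n)%nat ->
  0 <= y i /\ a i * y i + t i = headroom L (b i).
Proof.
  intros Hi. pose proof (Ha i Hi).
  destruct (capped_toll_bounds (a i) (K i) (headroom L (b i)) c) as [_ HT];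
    auto using balanced_weight_sum_nonneg, headroom_nonneg.
  unfold induced_flow. split.
  - unfold Rdiv. apply Rmult_le_pos; [unfold capped_toll; lra | left; apply Rinv_0_lt_compat; lra].
  - field. lra.
Qed.

Lemma induced_flow_on_level : on_level n lat t y L.
Proof.
  intros j Hj. cbv beta. destruct (induced_flow_cost j Hj) as [Hy Hcost].
  pose proof (induced_toll_bounds j Hj). pose proof (Ha j Hj).
  unfold headroom, Rmax in Hcost.
  destruct (Rle_dec 0 (L - b j)); split; intros; nra.
Qed.

Lemma induced_flow_is_flow : is_flow n y.
Proof. split; [intros j Hj; apply (induced_flow_cost j Hj) | apply Hbal]. Qed.

Lemma weighted_slack j : (j < n)%nat -> w j * (L - b j - t j) = a j * y j.
Proof.
  intros Hj. destruct (proj1 Hbal j Hj) as [_ [Hw1 Hw0]].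
  destruct (induced_flow_cost j Hj) as [Hy Hcost].
  pose proof (induced_toll_bounds j Hj). pose proof (Ha j Hj).
  assert (0 <= a j * y j) by nra.
  unfold headroom, Rmax in Hcost. destruct (Rle_dec 0 (L - b j)).
  - destruct (Rle_lt_dec L (b j)).
    + replace (L - b j - t j) with 0 by lra. lra.
    + rewrite Hw1 by lra. lra.
  - rewrite Hw0 by lra. lra.
Qed.

(* Every link j <> i is still used at cost at least the new level L', so it
   carries at least y_j + w_j (L' - L) / a_j; summing gives the bound. *)
Lemma deviation_flow_bound i v x' : (i < n)%nat ->
  wardrop n lat (update t i v) x' -> 0 < x' i ->
  K i * (v - t i) <= (y i - x' i) * (1 + a i * K i).
Proof.
  intros Hi [[Hx' Sx'] W] Hxi.
  set (L' := a i * x' i + b i + v).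
  assert (Hothers : forall j, (j < n)%nat -> j <> i -> y j + w j / a j * (L' - L) <= x' j).
  { intros j Hj Hji. pose proof (W i j Hi Hj Hxi) as Wij. cbv beta in Wij.
    unfold update in Wij. rewrite Nat.eqb_refl in Wij.
    destruct (Nat.eqb_spec j i) as [|_]; [lia|].
    pose proof (weighted_slack j Hj). pose proof (Ha j Hj).
    destruct (proj1 Hbal j Hj) as [Hw _]. pose proof (Hx' j Hj).
    apply (Rmult_le_reg_r (a j)); [lra|].
    replace ((y j + w j / a j * (L' - L)) * a j) with (a j * y j + w j * (L' - L))
      by (field; lra).
    rewrite <- weighted_slack by exact Hj.
    assert (0 <= a j * x' j) by nra. unfold L'. nra. }
  assert (Hsum : rsum_except n i y + rsum_except n i (fun j => w j / a j) * (L' - L)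
                 <= rsum_except n i x').
  { rewrite <- rsum_except_affine. apply rsum_except_le. exact Hothers. }
  assert (Ex' : 1 = x' i + rsum_except n i x') by (rewrite <- Sx'; apply rsum_split, Hi).
  assert (Ey : 1 = y i + rsum_except n i y)
    by (rewrite <- (proj2 Hbal); apply rsum_split, Hi).
  fold (weight_sum n a w i) in Hsum.
  pose proof (proj1 (induced_flow_on_level i Hi)) as HLi. cbv beta in HLi.
  pose proof (balanced_weight_sum_nonneg i).
  unfold L' in Hsum. nra.
Qed.

Theorem balanced_capped_SPNE : capped_SPNE n lat c t.
Proof.
  split; [exact induced_toll_bounds|].
  intros i Hi v Hv x x' Hx Hx'.
  destruct (wardrop_on_level n lat t x Hx) as [M HM].
  assert (Hmono : forall j, (j < n)%nat -> forall p q, p < q -> lat j p < lat j q).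
  { intros j Hj p q Hpq. pose proof (Ha j Hj). cbv beta. nra. }
  rewrite (on_level_flow_unique n lat Hmono t x y M L (proj1 Hx) induced_flow_is_flow
             HM induced_flow_on_level i Hi).
  pose proof (proj1 (induced_flow_cost i Hi)). pose proof (induced_toll_bounds i Hi).
  apply Rle_ge. destruct (Rlt_le_dec 0 (x' i)) as [Hpos|Hzero].
  - pose proof (Ha i Hi). pose proof (balanced_weight_sum_nonneg i).
    apply (deviation_profit_le (K i) (1 + a i * K i) (y i) (x' i) (t i) v c);
      [lra | nra | lra | |].
    + exact (deviation_flow_bound i v x' Hi Hx' Hpos).
    + apply capped_toll_shape; assumption.
  - assert (x' i = 0) as -> by (pose proof (proj1 (proj1 Hx') i Hi); lra). nra.
Qed.

End Equilibrium.

Definition lower_weights (b : nat -> R) L j : R := if Rlt_dec (b j) L then 1 else 0.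
Definition upper_weights (b : nat -> R) L j : R := if Rle_dec (b j) L then 1 else 0.

Section Existence.

Variables (n : nat) (a b : nat -> R) (c : R).
Hypotheses (Ha : forall i, (i < n)%nat -> 0 < a i) (Hc : 0 <= c).

Lemma total_flow_ext w1 w2 L : (forall j, (j < n)%nat -> w1 j = w2 j) ->
  total_flow n a b c w1 L = total_flow n a b c w2 L.
Proof.
  intros E. assert (EK : forall i, weight_sum n a w1 i = weight_sum n a w2 i).
  { intros i. apply rsum_ext. intros j Hj. rewrite E by exact Hj. reflexivity. }
  apply rsum_ext. intros i _. unfold induced_flow, capped_toll. rewrite EK. reflexivity.
Qed.

Lemma induced_flow_bounds w L : (forall j, (j < n)%nat -> 0 <= w j) ->
  forall i, (i < n)%nat -> 0 <= induced_flow n a b c w L i /\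
    headroom L (b i) - c <= a i * induced_flow n a b c w L i.
Proof.
  intros Hw i Hi. pose proof (Ha i Hi).
  destruct (capped_toll_bounds (a i) (weight_sum n a w i) (headroom L (b i)) c) as [HT HTu];
    auto using weight_sum_nonneg, headroom_nonneg.
  unfold induced_flow, capped_toll. split.
  - unfold Rdiv. apply Rmult_le_pos; [lra | left; apply Rinv_0_lt_compat; lra].
  - replace (a i * _) with (headroom L (b i) - Rmin c (best_toll (a i) (weight_sum n a w i)
      (headroom L (b i)))) by (field; lra). lra.
Qed.

Lemma total_flow_below_breakpoints w L :
  (forall j, (j < n)%nat -> L <= b j) -> total_flow n a b c w L = 0.
Proof.
  intros Hb. rewrite <- (rsum_zero n). apply rsum_ext. intros i Hi.
  pose proof (Hb i Hi).
  assert (Hh : headroom L (b i) = 0) by (unfold headroom, Rmax; destruct (Rle_dec 0 (L - b i)); lra).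
  unfold induced_flow, capped_toll in *. rewrite Hh in *.
  unfold best_toll. unfold Rdiv. rewrite !Rmult_0_l, Rmin_right by exact Hc. ring.
Qed.

Lemma total_flow_large w L i : (forall j, (j < n)%nat -> 0 <= w j) -> (i < n)%nat ->
  b i + c + a i <= L -> 1 <= total_flow n a b c w L.
Proof.
  intros Hw Hi HL. pose proof (Ha i Hi).
  destruct (induced_flow_bounds w L Hw i Hi) as [_ Hyi].
  assert (headroom L (b i) = L - b i) by (apply Rmax_right; lra).
  unfold total_flow. rewrite (rsum_split n _ i Hi).
  assert (0 <= rsum_except n i (induced_flow n a b c w L)).
  { apply rsum_nonneg. intros j Hj. destruct (Nat.eqb j i); [lra|].
    apply (induced_flow_bounds w L Hw j Hj). }
  nra.
Qed.

Lemma continuity_total_flow (Lp : R -> R) (wp : R -> nat -> R) : continuity Lp ->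
  (forall j, (j < n)%nat -> continuity (fun p => wp p j)) ->
  (forall p j, (j < n)%nat -> 0 <= wp p j) ->
  continuity (fun p => total_flow n a b c (wp p) (Lp p)).
Proof.
  intros HL Hwc Hw. apply continuity_rsum. intros i Hi. pose proof (Ha i Hi).
  assert (HK : continuity (fun p => weight_sum n a (wp p) i)).
  { apply continuity_rsum. intros j Hj. destruct (Nat.eqb j i); [apply continuity_const_fun|].
    apply (continuity_div (fun p => wp p j) (fun _ => a j)); [auto | apply continuity_const_fun |].
    intros p. pose proof (Ha j Hj). lra. }
  assert (HKpos : forall p, 0 <= weight_sum n a (wp p) i)
    by (intros; apply weight_sum_nonneg; auto).
  unfold induced_flow, capped_toll, best_toll, headroom.
  continuity_auto; intros p; [pose proof (HKpos p); nra | lra].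
Qed.

Lemma balanced_on_path (Lp : R -> R) (wp : R -> nat -> R) : continuity Lp ->
  (forall j, (j < n)%nat -> continuity (fun p => wp p j)) ->
  (forall p j, (j < n)%nat -> 0 <= wp p j) ->
  (forall p, 0 <= p <= 1 -> admissible_weights n b (Lp p) (wp p)) ->
  total_flow n a b c (wp 0) (Lp 0) <= 1 <= total_flow n a b c (wp 1) (Lp 1) ->
  exists L w, balanced n a b c L w.
Proof.
  intros HL Hwc Hw Hadm Hends.
  set (F := fun p => total_flow n a b c (wp p) (Lp p) - 1).
  assert (CF : continuity F).
  { apply (continuity_minus (fun p => total_flow n a b c (wp p) (Lp p)) (fun _ => 1)).
    - apply continuity_total_flow; assumption.
    - apply continuity_const_fun. }
  destruct (IVT_cor F 0 1 CF ltac:(lra)) as [p [Hp Fp]].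
  { unfold F. nra. }
  exists (Lp p), (wp p). split; [apply Hadm; lra | unfold F in Fp; lra].
Qed.

Lemma balanced_at_breakpoint L :
  total_flow n a b c (lower_weights b L) L <= 1 <= total_flow n a b c (upper_weights b L) L ->
  exists L w, balanced n a b c L w.
Proof.
  intros Hflow.
  (* th * th rather than th keeps the weights nonnegative for every real th,
     which the continuity of the flows requires. *)
  set (wp := fun th j => if Rlt_dec (b j) L then 1 else if Rle_dec (b j) L then th * th else 0).
  apply (balanced_on_path (fun _ => L) wp).
  - apply continuity_const_fun.
  - intros j _. unfold wp.
    destruct (Rlt_dec (b j) L); [|destruct (Rle_dec (b j) L)]; continuity_auto.
  - intros p j _. unfold wp.
    destruct (Rlt_dec (b j) L); [|destruct (Rle_dec (b j) L)]; nra.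
  - intros p Hp j _. unfold wp.
    destruct (Rlt_dec (b j) L); [|destruct (Rle_dec (b j) L)]; repeat split; intros; nra.
  - rewrite (total_flow_ext (wp 0) (lower_weights b L)), (total_flow_ext (wp 1) (upper_weights b L));
      [exact Hflow | |]; intros j _; unfold wp, lower_weights, upper_weights;
      destruct (Rlt_dec (b j) L); destruct (Rle_dec (b j) L); lra.
Qed.

Lemma balanced_between_breakpoints L0 L1 : L0 <= L1 ->
  (forall j, (j < n)%nat -> b j <= L0 \/ L1 <= b j) ->
  total_flow n a b c (upper_weights b L0) L0 <= 1 <= total_flow n a b c (upper_weights b L0) L1 ->
  exists L w, balanced n a b c L w.
Proof.
  intros HL Hgap Hflow.
  apply (balanced_on_path (fun p => L0 + p * (L1 - L0)) (fun _ => upper_weights b L0)).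
  - continuity_auto.
  - intros; apply continuity_const_fun.
  - intros p j _. unfold upper_weights. destruct (Rle_dec (b j) L0); lra.
  - intros p Hp j Hj. assert (L0 <= L0 + p * (L1 - L0) <= L1) by nra.
    pose proof (Hgap j Hj). unfold upper_weights.
    destruct (Rle_dec (b j) L0); repeat split; intros; lra.
  - cbv beta. replace (L0 + 0 * (L1 - L0)) with L0 by ring.
    replace (L0 + 1 * (L1 - L0)) with L1 by ring. exact Hflow.
Qed.

(* Take the lowest breakpoint b_k at which the flow with upper weights reaches
   one.  Either the jump of the weights at b_k straddles one, or the flow just
   below b_k already exceeds one and it crosses one on the gap between b_k and
   the next lower breakpoint.  If no breakpoint reaches one, the flow crosses
   one above the highest breakpoint. *)
Lemma exists_balanced : (0 < n)%nat -> exists L w, balanced n a b c L w.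
Proof.
  intros Hn.
  pose (Yup := fun L => total_flow n a b c (upper_weights b L) L).
  destruct (classic (exists k, (k < n)%nat /\ 1 <= Yup (b k))) as [Hreach|Hnever].
  - destruct (exists_argmin n (fun k => 1 <= Yup (b k)) b Hreach) as [k [Hk [Hk1 Hkmin]]].
    destruct (Rle_lt_dec (total_flow n a b c (lower_weights b (b k)) (b k)) 1) as [Hlow|Hlow].
    + apply (balanced_at_breakpoint (b k)). split; assumption.
    + assert (Hbelow : exists j, (j < n)%nat /\ b j < b k).
      { apply NNPP. intros Hno. rewrite total_flow_below_breakpoints in Hlow; [lra|].
        intros j Hj. destruct (Rlt_le_dec (b j) (b k)); [exfalso; eauto | lra]. }
      destruct (exists_argmax n (fun j => b j < b k) b Hbelow) as [q [Hq [Hqk Hqmax]]].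
      apply (balanced_between_breakpoints (b q) (b k)); [lra | |].
      * intros j Hj. destruct (Rlt_le_dec (b j) (b k)); [left; apply Hqmax; auto | right; lra].
      * split.
        -- destruct (Rlt_le_dec (Yup (b q)) 1) as [|Hq1]; [unfold Yup in *; lra|].
           pose proof (Hkmin q Hq Hq1). lra.
        -- rewrite (total_flow_ext _ (lower_weights b (b k))); [lra|].
           intros j Hj. pose proof (Hqmax j Hj). unfold upper_weights, lower_weights.
           destruct (Rle_dec (b j) (b q)), (Rlt_dec (b j) (b k)); try reflexivity; exfalso.
           ++ lra.
           ++ auto.
  - destruct (exists_argmax n (fun _ => True) b) as [q [Hq [_ Hqmax]]];
      [exists 0%nat; split; auto|].
    pose proof (Ha q Hq).
    apply (balanced_between_breakpoints (b q) (b q + c + a q)); [lra | |].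
    + intros j Hj. left. apply Hqmax; auto.
    + split.
      * destruct (Rlt_le_dec (Yup (b q)) 1) as [|Hq1]; [unfold Yup in *; lra|].
        exfalso. apply Hnever. exists q. auto.
      * apply (total_flow_large _ _ q); [|auto|lra].
        intros j _. unfold upper_weights. destruct (Rle_dec (b j) (b q)); lra.
Qed.

End Existence.

Theorem mainTheorem1 (n : nat) (a b : nat -> R) (c : R) :
  (2 <= n)%nat ->
  (forall i, (i < n)%nat -> 0 < a i /\ 0 <= b i) ->
  0 <= c ->
  exists t : nat -> R, capped_SPNE n (fun i y => a i * y + b i) c t.
Proof.
  intros Hn Hab Hc.
  assert (Ha : forall i, (i < n)%nat -> 0 < a i) by (intros i Hi; apply Hab, Hi).
  destruct (exists_balanced n a b c Ha Hc ltac:(lia)) as [L [w Hbal]].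
  exists (capped_toll n a b c w L).
  exact (balanced_capped_SPNE n a b c L w Ha Hc Hbal).
Qed.
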